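(* In the errorless symmetric relay network described in the context, under the greedy policy $G$ the AoI reductions satisfy, for every time slot $t\ge1$, \[ R(\mathcal{S}^{G}(t))=\min\{tS,K\},\qquad R(\mathcal{U}^{G}(t))=\min\{(t-1)U,K\}. \]
   Context: Fix integers $K\ge 2$ and $S,U$ with $1\le S<K$, $1\le U<K$, and $S=U$. There are $K$ processes indexed by $k\in\{1,\dots,K\}$ and time slots $t=1,2,\dots$. The state at time $t$ consists of relay AoI values $g_k(t)$ and destination AoI values $h_k(t)$, with $g_k(1)=h_k(1)=1$ for all $k$. A policy $\pi$ is a map assigning to the current state a pair $(\mathcal{S}^{\pi}(t),\mathcal{U}^{\pi}(t))$ of subsets of $\{1,\dots,K\}$ with $|\mathcal{S}^{\pi}(t)|=S$ and $|\mathcal{U}^{\pi}(t)|=U$. Errorless dynamics: $g_k(t+1)=1$ if $k\in\mathcal{S}(t)$, else $g_k(t+1)=g_k(t)+1$; $h_k(t+1)=g_k(t)+1$ if $k\in\mathcal{U}(t)$, else $h_k(t+1)=h_k(t)+1$. Define $R(\mathcal{S}^{\pi}(\tau))=\sum_{k\in\mathcal{S}^{\pi}(\tau)} g_k^{\pi}(\tau)$ and $R(\mathcal{U}^{\pi}(\tau))=\sum_{k\in\mathcal{U}^{\pi}(\tau)}(h_k^{\pi}(\tau)-g_k^{\pi}(\tau))$. The greedy policy $G$ chooses at each time $t$ a set $\mathcal{S}^G(t)$ of $S$ indices with the largest values $g_k(t)$ (maximizing $\sum_{k\in\mathcal{S}}g_k(t)$ over $|\mathcal{S}|=S$) and a set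 $\mathcal{U}^G(t)$ of $U$ indices with the largest gaps $h_k(t)-g_k(t)$ (maximizing $\sum_{k\in\mathcal{U}}(h_k(t)-g_k(t))$ over $|\mathcal{U}|=U$). *)

From HB Require Import structures.
From mathcomp Require Import all_boot all_order all_algebra.
Set Implicit Arguments. Unset Strict Implicit. Unset Printing Implicit Defensive.
Import Order.TTheory GRing.Theory Num.Theory.

(* Processes are indexed by 'I_K (0-based: k = 0..K-1).
   A state is the pair (g, h) of relay AoI and destination AoI vectors. *)
Definition state (K : nat) := ({ffun 'I_K -> nat} * {ffun 'I_K -> nat})%type.

Definition policy (K : nat) := state K -> ({set 'I_K} * {set 'I_K})%type.

Definition RS (K : nat) (st : state K) (A : {set 'I_K}) : nat :=
  \sum_(k in A) st.1 k.
Definition RU (K : nat) (st : state K) (B : {set 'I_K}) : int :=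
  (\sum_(k in B) ((st.2 k)%:Z - (st.1 k)%:Z))%R.

Definition step (K : nat) (st : state K) (SU : {set 'I_K} * {set 'I_K}) : state K :=
  ([ffun k => if k \in SU.1 then 1 else (st.1 k).+1],
   [ffun k => if k \in SU.2 then (st.1 k).+1 else (st.2 k).+1]).

Definition init_state (K : nat) : state K := ([ffun => 1], [ffun => 1]).

(* traj pol n = state at time slot t = n+1 *)
Fixpoint traj (K : nat) (pol : policy K) (n : nat) : state K :=
  match n with
  | 0 => init_state K
  | n'.+1 => step (traj pol n') (pol (traj pol n'))
  end.

Definition state_at (K : nat) (pol : policy K) (t : nat) : state K := traj pol t.-1.

(* G is a greedy policy (with arbitrary tie-breaking): at every state it picks
   S indices maximizing the sum of g and U indices maximizing the sum of gaps h-g. *)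
Definition greedy (K S U : nat) (pol : policy K) : Prop :=
  forall st : state K,
    [/\ #|(pol st).1| = S, #|(pol st).2| = U,
        (forall A : {set 'I_K}, #|A| = S -> RS st A <= RS st (pol st).1) &
        (forall B : {set 'I_K}, #|B| = U -> (RU st B <= RU st (pol st).2)%R)].

(* Under the greedy policy the relay ages form staircase layers: in every slot
   the S oldest processes are sampled, so after n slots exactly K - w S
   processes have relay age above w (for w <= n).  Reading a sum of ages layer
   by layer, the sampled set collects min(S, K - w S) from layer w, which adds
   up to min((n+1) S, K).  On the destination side, the gap h - g one slot after
   a sample equals the sampled age on the sampled set and vanishes elsewhere, so
   greedy updating (U = S) forwards exactly the previous sample and gains what
   that sample gained. *)

From HB Require Import structures.
From mathcomp Require Import all_boot all_order all_algebra zify.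
Import Order.TTheory GRing.Theory Num.Theory.

Set Implicit Arguments.
Unset Strict Implicit.

Section MaxSumSets.
Variables (T : finType) (f : T -> nat).

Lemma card_top_set_gt (A : {set T}) :
  (forall B : {set T}, #|B| = #|A| -> \sum_(k in B) f k <= \sum_(k in A) f k) ->
  forall w, #|[set k in A | w < f k]| = minn #|A| #|[set k | w < f k]|.
Proof.
move=> maxA w; set X := [set k in A | w < f k]; set Y := [set k | w < f k].
have XA : X \subset A by apply/subsetP => k; rewrite inE => /andP[].
have XY : X \subset Y by apply/subsetP => k; rewrite !inE => /andP[].
apply/eqP; rewrite eqn_leq leq_min !subset_leq_card //=.
rewrite geq_min; case: leqP => //= ltXA; rewrite leqNgt; apply/negP => ltXY.
have /subsetPn[i iA iX] : ~~ (A \subset X).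
  by apply: contraL ltXA => /subset_leq_card; rewrite -leqNgt.
have /subsetPn[j jY jX] : ~~ (Y \subset X).
  by apply: contraL ltXY => /subset_leq_card; rewrite -leqNgt.
have fij : f i < f j.
  by move: iX jY; rewrite !inE iA /= -leqNgt => /leq_ltn_trans; apply.
have jA : j \notin A by move: jX jY; rewrite !inE; case: (j \in A) => //= /negbTE->.
have jAi : j \notin A :\ i by rewrite inE negb_and jA orbT.
have := maxA (j |: (A :\ i)).
rewrite cardsU1 jAi (cardsD1 i A) iA big_setU1 //= (big_setD1 i iA) /=.
by move/(_ erefl); rewrite leq_add2r leqNgt fij.
Qed.

Lemma sum_layers (A : {set T}) N : (forall k, f k <= N) ->
  \sum_(k in A) f k = \sum_(w < N) #|[set k in A | w < f k]|.
Proof.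
move=> leN.
have layers m : \sum_(w < N) (w < m : nat) = minn m N.
  elim: N {leN} => [|N IH]; first by rewrite big_ord0 minn0.
  by rewrite big_ord_recr /= IH; case: (ltnP N m) => ?; lia.
rewrite (eq_bigr (fun k => \sum_(w < N) (w < f k : nat))); last first.
  by move=> k _; rewrite layers; apply/esym/minn_idPl.
rewrite exchange_big; apply: eq_bigr => w _.
by rewrite -big_mkcondr sum1_card; apply: eq_card => k; rewrite !inE.
Qed.

Lemma max_sum_support (A B : {set T}) :
  (forall k, (0 < f k) = (k \in A)) -> #|B| = #|A| ->
  \sum_(k in A) f k <= \sum_(k in B) f k -> B = A.
Proof.
move=> suppA cardB le_sum.
have offA k : k \notin A -> f k = 0 by rewrite -suppA lt0n negbK => /eqP.
have sumBA : \sum_(k in B :\: A) f k = 0.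
  by rewrite big1 // => k; rewrite inE => /andP[/offA].
have sumB : \sum_(k in B) f k = \sum_(k in A :&: B) f k.
  by rewrite (big_setID A) /= sumBA addn0 setIC.
move: le_sum; rewrite sumB (big_setID B) /= -[leqRHS]addn0 leq_add2l leqn0.
rewrite sum_nat_eq0 => /forallP AB0.
apply/esym/eqP; rewrite eqEcard cardB leqnn andbT -setD_eq0.
apply/eqP/setP => k; rewrite in_set0; apply: negbTE; apply/negP => kAB.
move: (AB0 k); rewrite kAB /=; apply/negP; rewrite -lt0n suppA.
by case/setDP: kAB.
Qed.

End MaxSumSets.

Lemma RU_gap K (st : state K) (d : 'I_K -> nat) :
  (forall k, st.2 k = st.1 k + d k) ->
  forall B, RU st B = Posz (\sum_(k in B) d k).
Proof.
move=> gap B; rewrite /RU -natz natr_sum; apply: eq_bigr => k _.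
by rewrite gap natz PoszD addrC addKr.
Qed.

Lemma sum_minn_staircase S K m :
  \sum_(w < m) minn S (K - w * S) = minn (m * S) K.
Proof.
elim: m => [|m IH]; first by rewrite big_ord0 mul0n min0n.
by rewrite big_ord_recr /= IH mulSn; lia.
Qed.

Section GreedyTrajectory.
Variables (K S : nat) (G : policy K).
Hypothesis greedyG : greedy S S G.

Local Notation g n := (traj G n).1.
Local Notation h n := (traj G n).2.
Local Notation sampled n := (G (traj G n)).1.
Local Notation updated n := (G (traj G n)).2.

Lemma relay_age_succ n k : g n.+1 k = if k \in sampled n then 1 else (g n k).+1.
Proof. by rewrite /= ffunE. Qed.

Lemma dest_age_succ n k :
  h n.+1 k = if k \in updated n then (g n k).+1 else (h n k).+1.
Proof. by rewrite /= ffunE. Qed.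

Lemma relay_age_gt0 n k : 0 < g n k.
Proof. by case: n => [|n]; rewrite ?relay_age_succ ?ffunE //; case: ifP. Qed.

Lemma relay_age_le n k : g n k <= n.+1.
Proof.
elim: n k => [|n IH] k; first by rewrite ffunE.
by rewrite relay_age_succ; case: ifP => // _; rewrite ltnS.
Qed.

Lemma card_sampled_gt n w :
  #|[set k in sampled n | w < g n k]| = minn S #|[set k | w < g n k]|.
Proof.
have [cardS _ maxS _] := greedyG (traj G n).
rewrite -cardS; apply: card_top_set_gt => B; rewrite cardS; exact: maxS.
Qed.

Lemma card_relay_age_gt n w : w <= n -> #|[set k | w < g n k]| = K - w * S.
Proof.
elim: n w => [|n IH] [|w] le_wn; rewrite ?subn0.
- by rewrite -[RHS]card_ord -cardsT; apply: eq_card => k; rewrite !inE ffunE.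
- by [].
- by rewrite -[RHS]card_ord -cardsT; apply: eq_card => k; rewrite !inE relay_age_gt0.
have -> : [set k | w.+1 < g n.+1 k] = [set k | w < g n k] :\: sampled n.
  by apply/setP => k; rewrite !inE relay_age_succ; case: ifP.
rewrite cardsD setIC.
have -> : sampled n :&: [set k | w < g n k] = [set k in sampled n | w < g n k].
  by apply/setP => k; rewrite !inE.
by rewrite card_sampled_gt IH //; lia.
Qed.

Lemma RS_greedy n : RS (traj G n) (sampled n) = minn (n.+1 * S) K.
Proof.
rewrite /RS (sum_layers _ (relay_age_le n)) -sum_minn_staircase.
by apply: eq_bigr => w _; rewrite card_sampled_gt card_relay_age_gt // -ltnS.
Qed.

Definition sample_gain n k := if k \in sampled n then g n k else 0.

Lemma updated_of_gap n :
  (forall k, h n.+1 k = g n.+1 k + sample_gain n k) -> updated n.+1 = sampled n.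
Proof.
move=> gap; have [cardS _ _ _] := greedyG (traj G n).
have [_ cardU _ maxU] := greedyG (traj G n.+1).
apply: (@max_sum_support _ (sample_gain n)); first 2 last.
- by rewrite -lez_nat -!(RU_gap gap) maxU.
- by move=> k; rewrite /sample_gain; case: ifP => // _; rewrite relay_age_gt0.
- by rewrite cardU cardS.
Qed.

Lemma gap_greedy n k : h n.+1 k = g n.+1 k + sample_gain n k.
Proof.
elim: n k => [|n IH] k.
  by rewrite dest_age_succ relay_age_succ /sample_gain !ffunE; case: ifP; case: ifP.
rewrite dest_age_succ (relay_age_succ n.+1) (updated_of_gap IH) IH /sample_gain.
by case: (k \in sampled n); case: (k \in sampled n.+1) => /=; lia.
Qed.

Lemma RU_greedy n : RU (traj G n.+1) (updated n.+1) = RS (traj G n) (sampled n).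
Proof.
rewrite (RU_gap (gap_greedy n)) (updated_of_gap (gap_greedy n)) /RS.
by congr Posz; apply: eq_bigr => k kS; rewrite /sample_gain kS.
Qed.

End GreedyTrajectory.

Theorem proposition3 (K S U : nat) (G : policy K) :
  2 <= K -> 1 <= S < K -> 1 <= U < K -> S = U ->
  greedy S U G ->
  forall t : nat, 1 <= t ->
    RS (state_at G t) (G (state_at G t)).1 = minn (t * S) K /\
    RU (state_at G t) (G (state_at G t)).2 = Posz (minn (t.-1 * U) K).
Proof.
move=> _ _ _ <- greedyG [//|n] _; rewrite /state_at /=.
split; first exact: RS_greedy.
case: n => [|n]; last by rewrite (RU_greedy greedyG) (RS_greedy greedyG).
by rewrite mul0n min0n /RU big1 // => k _; rewrite !ffunE subrr.
Qed.
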